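(* Let $d\ge 1$, let $1<s<2^d$ with $s=j\cdot 2^k$, $j$ odd, $k\ge 0$. For $t\ge 0$ set $\lambda_t=\lambda^*(d+t,2^t s)$ and $c_t=\frac12-\frac{2^{d-k}-1}{2^{d+t+1}-1}$. Then for every $t\ge 0$, $\lambda_t\le \frac12+c_t\lambda_{t+1}$. More precisely, for every $n\ge d+t+1$ and every $A\subseteq\mathbb{F}_2^n$, \[\lambda^*(n,d+t,2^t s,A)\le \frac12+c_t\,\lambda^*(n,d+t+1,2^{t+1}s,A).\]
   Context: For integers $n\ge d\ge 1$, a $d$-flat in $\mathbb{F}_2^n$ is a set $x_0+U$ with $x_0\in\mathbb{F}_2^n$ and $U$ a $d$-dimensional linear subspace of $\mathbb{F}_2^n$. For $A\subseteq\mathbb{F}_2^n$ and an integer $0\le s\le 2^d$, $\lambda^*(n,d,s,A)$ denotes the fraction of $d$-flats $Q$ in $\mathbb{F}_2^n$ with $|Q\cap A|=s$. Let $\lambda^*(n,d,s)=\max_{A}\lambda^*(n,d,s,A)$ and $\lambda^*(d,s)=\lim_{n\to\infty}\lambda^*(n,d,s)$. *)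

From HB Require Import structures.
From mathcomp Require Import all_boot all_order all_algebra.
Set Implicit Arguments. Unset Strict Implicit. Unset Printing Implicit Defensive.
Import Order.TTheory GRing.Theory Num.Theory.

Notation vec n := 'rV['F_2]_n.

Definition flat_of n (x0 : vec n) (U : 'M['F_2]_n) : {set vec n} :=
  [set x : vec n | ((x - x0)%R <= U)%MS].

Definition flats (n d : nat) : {set {set vec n}} :=
  [set Q : {set vec n} | [exists x0 : vec n, exists U : 'M['F_2]_n,
      (\rank U == d) && (Q == flat_of x0 U)]].

Definition lam (n d s : nat) (A : {set vec n}) : rat :=
  (#|[set Q in flats n d | #|Q :&: A| == s]|%:R / #|flats n d|%:R)%R.
Arguments lam n d s A : clear implicits.

From mathcomp Require Import all_boot all_order all_algebra.
From mathcomp Require Import zify ring.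
Import Order.TTheory GRing.Theory Num.Theory.
Set Implicit Arguments. Unset Strict Implicit. Unset Printing Implicit Defensive.
Local Open Scope ring_scope.

(* A (D+1)-flat is the image of an injective affine map psi from F_2^(D+1), and
   its D-subflats are the images of the affine hyperplanes {y | y.f = e},
   f <> 0.  The affine group acts transitively on D-flats, so lambda^* may be
   computed as a fraction of such parameters.  Fix psi and let B be the
   pull-back of A.  The two hyperplanes y.f = 0 and y.f = 1 split B, so at most
   one of them meets B in S points unless |B| = 2S, and then both do only if
   f is balanced.  When 2S = j 2^a with j odd, no (a+1)-dimensional space of
   functionals is entirely balanced (double counting would give
   2^(a+1) | (2^(a+1) - 1) |B|), so the unbalanced functionals block every such
   space and number at least 2^(D+1-a) - 1. *)

Lemma F2_cases (c : 'F_2) : c = 0 \/ c = 1.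
Proof. by case: c => [[|[|//]]] ?; [left|right]; apply/val_inj. Qed.

Lemma F2_add11 : (1 + 1 : 'F_2) = 0.
Proof. by apply/val_inj. Qed.

Lemma addrr_F2 m (v : 'rV['F_2]_m) : v + v = 0.
Proof.
apply/rowP => i; rewrite !mxE.
by case: (F2_cases (v 0 i)) => ->; rewrite ?addr0 ?F2_add11.
Qed.

Lemma sum_F2 (F : 'F_2 -> nat) : (\sum_(e : 'F_2) F e = F 0%R + F 1%R)%N.
Proof.
rewrite (bigD1 0) //= (bigD1 1) //= big1 ?addn0 // => e /andP [e1 e0].
by case: (F2_cases e) e1 e0 => ->; rewrite eqxx // andbF.
Qed.

Lemma card_rV_F2 m : #|{: 'rV['F_2]_m}| = (2 ^ m)%N.
Proof. by rewrite card_mx card_Fp // mul1n. Qed.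

Lemma card_rV_F2_neq0 m : #|[set f : 'rV['F_2]_m | f != 0]| = (2 ^ m - 1)%N.
Proof.
have -> : [set f : 'rV['F_2]_m | f != 0] = [set~ 0] by apply/setP => f; rewrite !inE.
by rewrite cardsC1 card_rV_F2 subn1.
Qed.

Lemma card_submx_F2 m p (L : 'M['F_2]_(p, m)) :
  #|[set x : 'rV['F_2]_m | (x <= L)%MS]| = (2 ^ \rank L)%N.
Proof.
have -> : [set x : 'rV['F_2]_m | (x <= L)%MS] =
    [set y *m row_base L | y in [set: 'rV['F_2]_(\rank L)]].
  apply/setP => x; rewrite inE; apply/idP/imsetP.
    by rewrite -(eq_row_base L) => /submxP [y ->]; exists y; rewrite ?inE.
  by move=> [y _ ->]; rewrite -(eq_row_base L) submxMl.
by rewrite card_imset ?cardsT ?card_rV_F2 //; apply: row_free_inj (row_base_free L).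
Qed.

Lemma card_set_sum (T : finType) (P Q : pred T) :
  #|[set y | P y & Q y]| = (\sum_(y | P y) Q y)%N.
Proof.
rewrite -sum1_card (eq_bigl (fun y => P y && Q y)) => [|y]; last by rewrite inE.
by rewrite big_mkcondr /=; apply: eq_bigr => y _; case: (Q y).
Qed.

Lemma card_pairs_F2 (T : finType) (P : pred T) (Q : T -> 'F_2 -> bool) :
  #|[set h : T * 'F_2 | P h.1 & Q h.1 h.2]| = (\sum_(f | P f) (Q f 0%R + Q f 1%R))%N.
Proof.
rewrite card_set_sum (eq_bigl (fun h : T * 'F_2 => P h.1 && predT h.2)) => [|h];
  last by rewrite andbT.
rewrite -(pair_big P predT (fun f e => (Q f e : nat))) /=.
by apply: eq_bigr => f _; rewrite sum_F2.
Qed.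

Lemma mxrank_addsmx_row m (L : 'M['F_2]_m) (v : 'rV['F_2]_m) :
  ~~ (v <= L)%MS -> \rank (L + v)%MS = (\rank L).+1.
Proof.
move=> nvL.
have v0 : v != 0 by apply: contra nvL => /eqP ->; rewrite sub0mx.
have rv : \rank v = 1%N by apply/eqP; rewrite eqn_leq rank_leq_row lt0n mxrank_eq0 v0.
have rc : \rank (L :&: v)%MS = 0%N.
  have := mxrank_leqif_sup (capmxSr L v); rewrite rv => le.
  suff : (\rank (L :&: v)%MS < 1)%N by case: (\rank _).
  rewrite (ltn_leqif le); apply: contra nvL => h.
  exact: submx_trans h (capmxSl _ _).
by have := mxrank_sum_cap L v; rewrite rc rv addn0 addn1.
Qed.

Lemma sub_addsmx_row m (L : 'M['F_2]_m) (v x : 'rV['F_2]_m) :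
  (x <= L + v)%MS -> exists2 u, (u <= L)%MS & (x = u \/ x = u + v).
Proof.
case/sub_addsmxP => [[u1 u2]] /= ->.
exists (u1 *m L); first exact: submxMl.
rewrite [u2]mx11_scalar mul_scalar_mx.
by case: (F2_cases (u2 0 0)) => ->; [left; rewrite scale0r addr0 | right; rewrite scale1r].
Qed.

Definition dot m (y f : 'rV['F_2]_m) : 'F_2 := (y *m f^T) 0 0.

Lemma dotDl m (y z f : 'rV['F_2]_m) : dot (y + z) f = dot y f + dot z f.
Proof. by rewrite /dot mulmxDl mxE. Qed.

Lemma dotDr m (y f g : 'rV['F_2]_m) : dot y (f + g) = dot y f + dot y g.
Proof. by rewrite /dot linearD /= mulmxDr mxE. Qed.

Lemma dotNl m (y f : 'rV['F_2]_m) : dot (- y) f = - dot y f.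
Proof. by rewrite /dot mulNmx mxE. Qed.

Lemma dot0r m (y : 'rV['F_2]_m) : dot y 0 = 0.
Proof. by rewrite /dot trmx0 mulmx0 mxE. Qed.

Lemma sub_kermx_dot m (y f : 'rV['F_2]_m) : (y <= kermx f^T)%MS = (dot y f == 0).
Proof.
rewrite sub_kermx /dot; apply/eqP/eqP => [->|h]; first by rewrite mxE.
by apply/matrixP => i j; rewrite (ord1 i) (ord1 j) h mxE.
Qed.

Lemma dot_surj m (f : 'rV['F_2]_m) (e : 'F_2) : f != 0 -> exists y, dot y f = e.
Proof.
move=> f0; case: (pickP (fun i => f 0 i == 1)) => [i /eqP fi | none].
  by exists (e *: delta_mx 0 i); rewrite /dot -scalemxAl -rowE !mxE fi mulr1.
case/eqP: f0; apply/rowP => i; rewrite mxE.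
by case: (F2_cases (f 0 i)) (none i) => -> //; rewrite eqxx.
Qed.

Definition dotcnt m (B : {set 'rV['F_2]_m}) (f : 'rV['F_2]_m) (e : 'F_2) :=
  #|[set y in B | dot y f == e]|.

Lemma dotcnt0_add1 m (B : {set 'rV['F_2]_m}) f : (dotcnt B f 0%R + dotcnt B f 1%R = #|B|)%N.
Proof.
rewrite /dotcnt -(cardsID [set y | dot y f == 1] B) addnC.
by congr (_ + _)%N; apply: eq_card => y; rewrite !inE;
  case: (F2_cases (dot y f)) => ->; rewrite ?andbT ?andbF.
Qed.

Lemma card_dot1_half m (W : 'M['F_2]_m) (y f0 : 'rV['F_2]_m) :
  (f0 <= W)%MS -> dot y f0 = 1 ->
  (2 * #|[set f : 'rV_m | (f <= W)%MS & dot y f == 1%R]|)%N =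
  #|[set f : 'rV_m | (f <= W)%MS]|.
Proof.
move=> f0W d1.
have shift_inj : injective (fun f : 'rV['F_2]_m => f + f0) by apply: addIr.
have shift_le (e : 'F_2) :
    (#|[set f : 'rV_m | (f <= W)%MS & dot y f == e]|
      <= #|[set f : 'rV_m | (f <= W)%MS & dot y f == (1 + e)%R]|)%N.
  rewrite -(card_imset _ shift_inj); apply: subset_leq_card.
  apply/subsetP => g /imsetP [f]; rewrite !inE => /andP [fW /eqP df] ->.
  by rewrite addmx_sub // dotDr df d1 addrC eqxx.
have eq10 : #|[set f : 'rV_m | (f <= W)%MS & dot y f == 1]| =
            #|[set f : 'rV_m | (f <= W)%MS & dot y f == 0]|.
  apply/eqP; rewrite eqn_leq; have := shift_le 1; have := shift_le 0.
  by rewrite F2_add11 addr0 => -> ->.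
rewrite mul2n -addnn {2}eq10 -(cardsID [set f | dot y f == 1] [set f | (f <= W)%MS]).
by congr (_ + _)%N; apply: eq_card => f; rewrite !inE;
  case: (F2_cases (dot y f)) => ->; rewrite ?andbT ?andbF.
Qed.

Lemma balanced_dvd m (B : {set 'rV['F_2]_m}) (W : 'M['F_2]_m) :
  (forall f, (f <= W)%MS -> f != 0 -> (2 * dotcnt B f 1%R)%N = #|B|) ->
  (2 ^ \rank W %| (2 ^ \rank W).-1 * #|B|)%N.
Proof.
move=> balanced; rewrite -card_submx_F2.
set WS := [set f : 'rV_m | (f <= W)%MS].
have double_count : (\sum_(f | (f <= W)%MS) dotcnt B f 1%R =
    \sum_(y in B) #|[set f : 'rV_m | (f <= W)%MS & dot y f == 1%R]|)%N.
  rewrite /dotcnt; under eq_bigr do rewrite card_set_sum.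
  by rewrite exchange_big /=; apply: eq_bigr => y _; rewrite card_set_sum.
have sum_balanced : (2 * \sum_(f | (f <= W)%MS) dotcnt B f 1%R = (#|WS|).-1 * #|B|)%N.
  rewrite big_distrr /= (bigD1 0) ?sub0mx //=.
  have -> : dotcnt B 0 1%R = 0%N by apply: eq_card0 => y; rewrite !inE dot0r andbF.
  rewrite muln0 add0n (eq_bigr (fun _ => #|B|)) => [|f /andP [fW f0]]; last exact: balanced.
  rewrite sum_nat_const (cardD1 0 WS) inE sub0mx /=; congr (_ * _)%N.
  by apply: eq_card => f; rewrite !inE andbC.
(* In the double count each y in B is counted either 0 or |W|/2 times. *)
apply/dvdnP; exists (\sum_(y in B) [exists f0, (f0 <= W)%MS && (dot y f0 == 1%R)])%N.
rewrite -sum_balanced double_count mulnC !big_distrl /=; apply: eq_bigr => y _.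
case: existsP => [[f0 /andP [f0W /eqP d1]]|nex].
  by rewrite mul1n -(card_dot1_half f0W d1) mulnC.
rewrite mul0n (_ : #|_| = 0%N) ?muln0 //; apply: eq_card0 => f; rewrite !inE.
by apply/negP => /andP [fW d1]; apply: nex; exists f; rewrite fW.
Qed.

Section BlockingExtension.
Variables (m : nat) (L : 'M['F_2]_m) (X : {set 'rV['F_2]_m}) (v : 'rV['F_2]_m).
Hypothesis X_notsub : forall x, x \in X -> ~~ (x <= L)%MS.
Hypothesis X_addsub : forall x u, x \in X -> (u <= L)%MS -> x + u \in X.
Hypothesis v_notin : v \notin X.

Let Xv := [set x | (x \in X) || (x + v \in X)].

Lemma addsub_notin u : (u <= L)%MS -> u + v \notin X.
Proof.
move=> uL; apply: contra v_notin => uvX.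
by rewrite -(addKr u v) addrC X_addsub ?eqmx_opp.
Qed.

Lemma extension_notsub x : x \in Xv -> ~~ (x <= L + v)%MS.
Proof.
rewrite inE => /orP [xX|xvX]; apply/negP => /sub_addsmx_row [u uL [ex|ex]].
- by move: (X_notsub xX); rewrite ex uL.
- by move: xX; rewrite ex (negPf (addsub_notin uL)).
- by move: xvX; rewrite ex (negPf (addsub_notin uL)).
- by move: (X_notsub xvX); rewrite ex -addrA addrr_F2 addr0 uL.
Qed.

Lemma extension_addsub x u : x \in Xv -> (u <= L + v)%MS -> x + u \in Xv.
Proof.
rewrite !inE => /orP [xX|xvX] /sub_addsmx_row [w wL [->|->]]; apply/orP.
- by left; apply: X_addsub.
- by right; rewrite -!addrA addrr_F2 addr0 X_addsub.
- by right; rewrite addrAC X_addsub.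
- by left; rewrite addrA addrAC X_addsub.
Qed.

Lemma card_extension : (#|Xv| <= 2 * #|X|)%N.
Proof.
have -> : Xv = X :|: [set x + v | x in X].
  apply/setP => x; rewrite !inE; congr (_ || _); apply/idP/imsetP.
    by move=> xv; exists (x + v); rewrite // -addrA addrr_F2 addr0.
  by move=> [y yX ->]; rewrite -addrA addrr_F2 addr0.
by rewrite mul2n -addnn (leq_trans (leq_card_setU _ _)) // leq_add2l leq_imset_card.
Qed.

End BlockingExtension.

Lemma card_notsubmx_le m (L : 'M['F_2]_m) (X : {set 'rV['F_2]_m}) :
  (forall x, ~~ (x <= L)%MS -> x \in X) -> (2 ^ m - 2 ^ \rank L <= #|X|)%N.
Proof.
move=> notsub_in.
rewrite -card_rV_F2 -card_submx_F2 -(cardsC [set x | (x <= L)%MS]) addKn.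
by apply: subset_leq_card; apply/subsetP => x; rewrite !inE => /notsub_in.
Qed.

(* X is a union of cosets of the row space of L avoiding it, i.e. a set of
   nonzero vectors of the quotient by L; the bound is 2^l times the blocking
   bound 2^(m-l-a) - 1 in that quotient. *)
Lemma card_blocking m a : forall l (L : 'M['F_2]_m) (X : {set 'rV['F_2]_m}),
  \rank L = l -> (l + a + 1 <= m)%N ->
  (forall x, x \in X -> ~~ (x <= L)%MS) ->
  (forall x u, x \in X -> (u <= L)%MS -> x + u \in X) ->
  (forall W : 'M['F_2]_m, (L <= W)%MS -> \rank W = (l + a + 1)%N ->
     exists2 x, x \in X & (x <= W)%MS) ->
  (2 ^ l * (2 ^ (m - l - a) - 1) <= #|X|)%N.
Proof.
have full_bound l (L : 'M['F_2]_m) (X : {set 'rV['F_2]_m}) e :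
    \rank L = l -> (l + e <= m)%N -> [pred v | ~~ (v <= L)%MS & v \notin X] =1 xpred0 ->
  (2 ^ l * (2 ^ e - 1) <= #|X|)%N.
  move=> rL lem none; apply: leq_trans (card_notsubmx_le (L := L) _) => [|x nxL];
    last first.
    by move: (none x); rewrite /= nxL => /negbFE.
  by rewrite rL mulnBr muln1 -expnD leq_sub2r // leq_exp2l.
elim: a => [|a IH] l L X rL lm X_notsub X_addsub X_meets;
  (case: (pickP [pred v | ~~ (v <= L)%MS & v \notin X]) => [v /andP [nvL nvX] | none];
   last by apply: full_bound rL _ none; lia).
  have rLv : \rank (L + v)%MS = (l + 0 + 1)%N by rewrite mxrank_addsmx_row // rL addn0 addn1.
  have [x xX xLv] := X_meets (L + v)%MS (addsmxSl _ _) rLv.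
  have := extension_notsub X_notsub X_addsub nvX (x := x).
  by rewrite inE xX xLv => /(_ isT).
pose Xv := [set x | (x \in X) || (x + v \in X)].
have rLv : \rank (L + v)%MS = l.+1 by rewrite mxrank_addsmx_row // rL.
have Xv_meets (W : 'M['F_2]_m) : (L + v <= W)%MS -> \rank W = (l.+1 + a + 1)%N ->
    exists2 x, x \in Xv & (x <= W)%MS.
  move=> LvW rW; have rW' : \rank W = (l + a.+1 + 1)%N by rewrite rW; lia.
  have [x xX xW] := X_meets W (submx_trans (addsmxSl L v) LvW) rW'.
  by exists x; rewrite // inE xX.
have lm' : (l.+1 + a + 1 <= m)%N by lia.
have := IH _ _ Xv rLv lm' (extension_notsub X_notsub X_addsub nvX)
  (extension_addsub X_addsub) Xv_meets.
rewrite expnS -mulnA (_ : m - l.+1 - a = m - l - a.+1)%N; last by lia.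
by move=> /leq_trans/(_ (card_extension X v)); rewrite leq_pmul2l.
Qed.

Lemma card_unbalanced m a j (B : {set 'rV['F_2]_m}) :
  (a < m)%N -> odd j -> #|B| = (j * 2 ^ a)%N ->
  (2 ^ (m - a) - 1 <=
     #|[set f : 'rV['F_2]_m | (f != 0%R) && (2 * dotcnt B f 1%R != #|B|)%N]|)%N.
Proof.
move=> am oj cB; set U := [set f | _].
have := @card_blocking m a 0 0 U (mxrank0 _ _ _) (ltac:(lia)).
rewrite expn0 mul1n subn0; apply.
- by move=> x; rewrite inE submx0 => /andP [].
- by move=> x u xU; rewrite submx0 => /eqP ->; rewrite addr0.
move=> W _ rW; apply/exists_inP; apply: contraT => /exists_inPn not_meets.
have := @balanced_dvd m B W; rewrite rW add0n cB addn1.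
have -> : ((2 ^ a.+1).-1 * (j * 2 ^ a) = (2 ^ a.+1).-1 * j * 2 ^ a)%N by rewrite mulnA.
rewrite [X in (X %| _)%N]expnS dvdn_pmul2r ?expn_gt0 // dvdn2 oddM oj andbT.
rewrite -subn1 oddB ?expn_gt0 // expnS oddM /=; apply => f fW f0.
apply/eqP; rewrite -cB; apply: contraTT fW => ne.
by apply: not_meets; rewrite inE f0 ne.
Qed.

Lemma odd_double_exp_gt0 j S a : odd j -> (2 * S = j * 2 ^ a)%N -> (0 < a)%N.
Proof.
by case: a => // oj; rewrite expn0 muln1 => eS; move: oj; rewrite -eS mul2n odd_double.
Qed.

Lemma card_hyperplane_sections m a j S (B : {set 'rV['F_2]_m}) :
  (a < m)%N -> odd j -> (2 * S = j * 2 ^ a)%N ->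
  (#|[set h : 'rV['F_2]_m * 'F_2 | (h.1 != 0%R) & (dotcnt B h.1 h.2 == S)]|
     <= (2 ^ m - 1) + (#|B| == 2 * S) * ((2 ^ m - 1) - 2 * (2 ^ (m - a) - 1)))%N.
Proof.
move=> am oj eS; have a0 := odd_double_exp_gt0 oj eS.
rewrite (card_pairs_F2 (fun f => f != 0) (fun f e => dotcnt B f e == S)).
have c01 := dotcnt0_add1 B.
have [hB|hB] := eqVneq #|B| (2 * S)%N; last first.
  rewrite mul0n addn0 -card_rV_F2_neq0 -sum1dep_card; apply: leq_sum => f _.
  by have := c01 f; move/eqP: hB; case: eqP; case: eqP => /=; lia.
set U := [set f : 'rV['F_2]_m | (f != 0%R) && (2 * dotcnt B f 1%R != #|B|)%N].
have hU : (2 ^ (m - a) - 1 <= #|U|)%N by apply: card_unbalanced am oj _; rewrite hB.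
apply: (@leq_trans (\sum_(f | f != 0%R) 2 * (f \notin U))%N).
  apply: leq_sum => f f0; rewrite inE f0 /=.
  by have := c01 f; move: hB; case: eqP; case: eqP => /=; lia.
rewrite -big_distrr /= -card_set_sum.
have -> : [set f : 'rV['F_2]_m | f != 0 & f \notin U] = [set f | f != 0] :\: U.
  by apply/setP => f; rewrite !inE andbC.
rewrite cardsD (setIidPr _) ?card_rV_F2_neq0; last first.
  by apply/subsetP => f; rewrite !inE => /andP [].
have : (2 * 2 ^ (m - a) <= 2 ^ m)%N by rewrite -expnS leq_exp2l //; lia.
have := expn_gt0 2 (m - a); lia.
Qed.

Section UniformFibres.
Variables (T Y : finType) (XS : {set T}) (p : T -> Y) (F : {set Y}).
Hypothesis p_in : {in XS, forall x, p x \in F}.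
Hypothesis fibre_inj : forall P P', P \in F -> P' \in F ->
  exists2 σ : T -> T, injective σ &
    {in XS, forall x, p x = P -> σ x \in XS /\ p (σ x) = P'}.

Let fibre P := #|[set x in XS | p x == P]|.

Lemma card_fibre_le P P' : P \in F -> P' \in F -> (fibre P <= fibre P')%N.
Proof.
move=> PF P'F; have [σ σ_inj σ_fibre] := fibre_inj PF P'F.
rewrite /fibre -(card_imset _ σ_inj); apply: subset_leq_card; apply/subsetP => z.
case/imsetP => x; rewrite inE => /andP [xX /eqP px] ->.
by have [σX σp] := σ_fibre x xX px; rewrite inE σX σp eqxx.
Qed.

Lemma card_preim_sum (q : pred Y) :
  #|[set x in XS | q (p x)]| = (\sum_(P in F) q P * fibre P)%N.
Proof.
rewrite card_set_sum (partition_big p (mem F)) //=; apply: eq_bigr => P _.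
rewrite (eq_bigr (fun _ => q P * 1)%N) => [|x /andP [_ /eqP ->]]; last by rewrite muln1.
by rewrite -big_distrr /= sum1dep_card.
Qed.

Lemma card_preim_uniform (q : pred Y) :
  (#|[set x in XS | q (p x)]| * #|F| = #|[set P in F | q P]| * #|XS|)%N.
Proof.
have [F0|[P0 P0F]] := set_0Vmem F.
  rewrite F0 cards0 muln0 (_ : [set P in set0 | q P] = set0) ?cards0 //.
  by apply/setP => P; rewrite !inE.
have fibreE P : P \in F -> fibre P = fibre P0.
  by move=> PF; apply/eqP; rewrite eqn_leq !card_fibre_le.
have cardXS : #|XS| = (#|F| * fibre P0)%N.
  transitivity #|[set x in XS | predT (p x)]|.
    by apply: eq_card => x; rewrite !inE andbT.
  rewrite card_preim_sum (eq_bigr (fun _ => fibre P0)) ?sum_nat_const // => P PF.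
  by rewrite mul1n fibreE.
rewrite cardXS card_preim_sum (eq_bigr (fun P => q P * fibre P0)%N) => [|P PF]; last first.
  by rewrite fibreE.
by rewrite -big_distrl /= -card_set_sum -mulnA (mulnC (fibre P0)).
Qed.

End UniformFibres.

Definition affmap n (v : vec n) (G : 'M['F_2]_n) (Q : {set vec n}) : {set vec n} :=
  [set x *m G + v | x in Q].

Lemma affmap_flat n (x0 v : vec n) (U G : 'M['F_2]_n) : G \in unitmx ->
  affmap v G (flat_of x0 U) = flat_of (x0 *m G + v) (U *m G).
Proof.
move=> Gu; have Gf : row_free G by rewrite row_free_unit.
apply/setP => y; rewrite inE; apply/imsetP/idP.
  move=> [x]; rewrite inE => xU ->.
  have -> : x *m G + v - (x0 *m G + v) = (x - x0) *m G.
    by rewrite mulmxBl opprD addrACA subrr addr0.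
  exact: submxMr.
move=> yU; exists ((y - v) *m invmx G); last by rewrite mulmxKV // subrK.
by rewrite inE -(submxMfree _ _ Gf) mulmxBl mulmxKV // -addrA -opprD (addrC v).
Qed.

Lemma flats_transitive n D (P P' : {set vec n}) : P \in flats n D -> P' \in flats n D ->
  exists v G, G \in unitmx /\ affmap v G P = P'.
Proof.
rewrite !inE => /existsP [x0 /existsP [U /andP [/eqP rU /eqP ->]]].
move=> /existsP [x1 /existsP [U' /andP [/eqP rU' /eqP ->]]].
have [G Gu eG] := eq_rank_unitmx (etrans rU (esym rU')).
exists (x1 - x0 *m G), G; split => //.
by rewrite affmap_flat // addrC subrK; apply/setP => x; rewrite !inE eG.
Qed.

Definition aff_img n m (ψ : vec n * 'M['F_2]_(m, n)) (H : {set 'rV['F_2]_m}) :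
  {set vec n} := [set ψ.1 + y *m ψ.2 | y in H].

Definition frame_act n m (v : vec n) (G : 'M['F_2]_n) (ψ : vec n * 'M['F_2]_(m, n)) :=
  (ψ.1 *m G + v, ψ.2 *m G).

Definition frames n m := [set ψ : vec n * 'M['F_2]_(m, n) | row_free ψ.2].

Lemma affmap_aff_img n m (v : vec n) (G : 'M['F_2]_n) ψ (H : {set 'rV['F_2]_m}) :
  affmap v G (aff_img ψ H) = aff_img (frame_act v G ψ) H.
Proof.
rewrite /affmap -imset_comp; apply: eq_imset => y /=.
by rewrite mulmxDl mulmxA addrAC.
Qed.

Lemma frame_act_inj n m (v : vec n) (G : 'M['F_2]_n) : G \in unitmx ->
  injective (@frame_act n m v G).
Proof.
rewrite -row_free_unit => Gf [x1 M1] [x2 M2] [/addIr e1 e2].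
by rewrite (row_free_inj Gf e1) (row_free_inj Gf e2).
Qed.

Lemma frame_act_frames n m (v : vec n) (G : 'M['F_2]_n) ψ : G \in unitmx ->
  ψ \in frames n m -> frame_act v G ψ \in frames n m.
Proof. by move=> Gu; rewrite !inE /row_free /= mxrankMfree // row_free_unit. Qed.

Lemma frames_gt0 n m : (m <= n)%N -> (0 < #|frames n m|)%N.
Proof.
by move=> mn; apply/card_gt0P; exists (0, pid_mx m); rewrite inE /row_free rank_pid_mx.
Qed.

Lemma aff_img_flats n m ψ : ψ \in frames n m -> aff_img ψ [set: 'rV_m] \in flats n m.
Proof.
case: ψ => x0 M; rewrite inE /= => Mf.
rewrite /flats inE; apply/existsP; exists x0; apply/existsP; exists <<M>>%MS.
rewrite genmxE (eqP Mf) eqxx /=.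
apply/eqP/setP => x; rewrite inE genmxE; apply/imsetP/idP.
  by move=> [y _ ->]; rewrite addrC addKr submxMl.
by case/submxP => y ey; exists y; rewrite ?inE // -ey addrC subrK.
Qed.

Definition hyps m := setX [set f : 'rV['F_2]_m | f != 0] [set: 'F_2].

Definition hyp_img n m (x : (vec n * 'M['F_2]_(m, n)) * ('rV['F_2]_m * 'F_2)) :=
  aff_img x.1 [set y | dot y x.2.1 == x.2.2].

Lemma card_hyps m : #|hyps m| = ((2 ^ m - 1) * 2)%N.
Proof. by rewrite cardsX card_rV_F2_neq0 cardsT card_Fp. Qed.

Lemma hyp_img_flats n D ψ h : ψ \in frames n D.+1 -> h \in hyps D.+1 ->
  hyp_img (ψ, h) \in flats n D.
Proof.
case: ψ h => [x0 M] [f e]; rewrite !inE /= andbT => Mf f0.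
have [y0 dy0] := dot_surj e f0.
apply/existsP; exists (x0 + y0 *m M); apply/existsP.
exists <<kermx f^T *m M>>%MS.
rewrite genmxE mxrankMfree // mxrank_ker mxrank_tr.
have -> : \rank f = 1%N by apply/eqP; rewrite eqn_leq rank_leq_row lt0n mxrank_eq0.
rewrite subn1 eqxx /=; apply/eqP/setP => x; rewrite inE genmxE; apply/imsetP/idP.
  move=> [y]; rewrite inE /= => /eqP dy ->.
  rewrite opprD addrACA subrr add0r -mulmxBl submxMr // sub_kermx_dot.
  by rewrite dotDl dotNl dy dy0 subrr.
case/submxP => z ez; exists (y0 + z *m kermx f^T).
  by rewrite inE dotDl dy0 /dot -mulmxA mulmx_ker mulmx0 mxE addr0.
by rewrite mulmxDl -mulmxA -ez addrA addrC subrK.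
Qed.

Lemma lam_param n D S (A : {set vec n}) (T : finType) (XS : {set T})
    (p : T -> {set vec n}) :
  XS != set0 -> {in XS, forall x, p x \in flats n D} ->
  (forall v G, G \in unitmx -> exists2 σ : T -> T, injective σ &
     {in XS, forall x, σ x \in XS /\ p (σ x) = affmap v G (p x)}) ->
  lam n D S A = #|[set x in XS | #|p x :&: A| == S]|%:R / #|XS|%:R.
Proof.
move=> XS0 p_flats lift; have /set0Pn [x0 x0XS] := XS0.
have fibre_inj P P' : P \in flats n D -> P' \in flats n D -> exists2 σ : T -> T,
    injective σ & {in XS, forall x, p x = P -> σ x \in XS /\ p (σ x) = P'}.
  move=> PF P'F; have [v [G [Gu <-]]] := flats_transitive PF P'F.
  have [σ σ_inj σ_lift] := lift v G Gu.
  by exists σ => // x xX px; rewrite -px; apply: σ_lift.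
have F0 : #|flats n D|%:R != 0 :> rat.
  by rewrite pnatr_eq0 -lt0n; apply/card_gt0P; exists (p x0); apply: p_flats.
have XS0' : #|XS|%:R != 0 :> rat by rewrite pnatr_eq0 -lt0n card_gt0.
apply/eqP; rewrite /lam eqr_div // -!natrM.
by rewrite (card_preim_uniform p_flats fibre_inj (fun Q => #|Q :&: A| == S)).
Qed.

Lemma lam_frames n m S (A : {set vec n}) : (m <= n)%N ->
  lam n m S A = #|[set ψ in frames n m | #|aff_img ψ [set: 'rV_m] :&: A| == S]|%:R
                / #|frames n m|%:R.
Proof.
move=> mn; apply: lam_param => [|ψ /aff_img_flats //|v G Gu].
  by rewrite -card_gt0 frames_gt0.
exists (frame_act v G); first exact: frame_act_inj.
by move=> ψ ψP; rewrite frame_act_frames // affmap_aff_img.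
Qed.

Lemma lam_hyps n D S (A : {set vec n}) : (D < n)%N ->
  lam n D S A = #|[set x in setX (frames n D.+1) (hyps D.+1) | #|hyp_img x :&: A| == S]|%:R
                / #|setX (frames n D.+1) (hyps D.+1)|%:R.
Proof.
move=> Dn; apply: lam_param => [|[ψ h]|v G Gu].
- rewrite -card_gt0 cardsX card_hyps !muln_gt0 frames_gt0 //= subn_gt0.
  by rewrite -{1}(expn0 2) ltn_exp2l.
- by rewrite in_setX => /andP []; apply: hyp_img_flats.
exists (fun x => (frame_act v G x.1, x.2)).
  move=> [ψ h] [ψ' h'] e; have /= /(frame_act_inj Gu) -> := congr1 fst e.
  by have /= -> := congr1 snd e.
move=> [ψ h]; rewrite !in_setX => /andP [ψP hH].
by rewrite frame_act_frames // hH /hyp_img affmap_aff_img.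
Qed.

Lemma card_aff_img_cap n m ψ (H : {set 'rV['F_2]_m}) (A : {set vec n}) :
  ψ \in frames n m -> #|aff_img ψ H :&: A| = #|[set y in H | ψ.1 + y *m ψ.2 \in A]|.
Proof.
rewrite inE => ψf; have ψ_inj : injective (fun y : 'rV_m => ψ.1 + y *m ψ.2).
  by move=> y z /addrI /(row_free_inj ψf).
rewrite -(card_imset _ ψ_inj); apply: eq_card => z; rewrite !inE.
apply/andP/imsetP => [[/imsetP [y yH ->] yA]|[y]]; first by exists y; rewrite // inE yH.
by rewrite inE => /andP [yH yA] ->; split => //; apply: imset_f.
Qed.

Lemma card_hyp_sections_le n m a j S (A : {set vec n}) :
  (a < m)%N -> odd j -> (2 * S = j * 2 ^ a)%N ->
  (#|[set x in setX (frames n m) (hyps m) | #|hyp_img x :&: A| == S]|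
    <= #|frames n m| * (2 ^ m - 1)
       + #|[set ψ in frames n m | #|aff_img ψ [set: 'rV_m] :&: A| == 2 * S]|
         * ((2 ^ m - 1) - 2 * (2 ^ (m - a) - 1)))%N.
Proof.
move=> am oj eS; rewrite card_set_sum.
rewrite (eq_bigl (fun x => (x.1 \in frames n m) && (x.2 \in hyps m))) => [|[? ?]];
  last by rewrite in_setX.
rewrite -(pair_big (mem (frames n m)) (mem (hyps m))
  (fun ψ h => (#|hyp_img (ψ, h) :&: A| == S : nat))) /=.
rewrite card_set_sum big_distrl /= -sum_nat_const -big_split /=.
apply: leq_sum => ψ ψP; rewrite -card_set_sum.
set B := [set y | ψ.1 + y *m ψ.2 \in A].
have cardB : #|aff_img ψ [set: 'rV_m] :&: A| = #|B|.
  by rewrite card_aff_img_cap //; apply: eq_card => y; rewrite !inE.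
rewrite cardB; apply: leq_trans (card_hyperplane_sections B am oj eS).
apply: subset_leq_card; apply/subsetP => -[f e].
rewrite !inE /= andbT => /andP [f0 hS]; rewrite f0 -(eqP hS) card_aff_img_cap //.
by apply/eqP; apply: eq_card => y; rewrite !inE andbC.
Qed.

Lemma ler_ratio_bound (NX NP P M E : nat) : (0 < P)%N -> (0 < M)%N -> (0 < E)%N ->
  (2 * (E - 1) <= M)%N -> (NX <= P * M + NP * (M - 2 * (E - 1)))%N ->
  NX%:R / (P * (M * 2))%:R <= 1 / 2 + (1 / 2 - (E%:R - 1) / M%:R) * (NP%:R / P%:R) :> rat.
Proof.
move=> P0 M0 E0 EM le.
have P0' : P%:R != 0 :> rat by rewrite pnatr_eq0 -lt0n.
have M0' : M%:R != 0 :> rat by rewrite pnatr_eq0 -lt0n.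
have -> : 1 / 2 + (1 / 2 - (E%:R - 1) / M%:R) * (NP%:R / P%:R) =
    (P * M + NP * (M - 2 * (E - 1)))%:R / (P * (M * 2))%:R :> rat.
  by rewrite natrD !natrM natrB // natrM natrB //; field; rewrite P0' M0'.
by rewrite ler_pM2r ?invr_gt0 ?ltr0n ?muln_gt0 ?P0 ?M0 // ler_nat.
Qed.

Lemma lam_hyperplane_bound n D a j S (A : {set vec n}) :
  (D < n)%N -> (a <= D)%N -> odd j -> (2 * S = j * 2 ^ a)%N ->
  lam n D S A <= 1 / 2 + (1 / 2 - ((2 ^ (D.+1 - a))%:R - 1) / ((2 ^ D.+1)%:R - 1))
                         * lam n D.+1 (2 * S) A.
Proof.
move=> Dn aD oj eS; have a0 := odd_double_exp_gt0 oj eS.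
rewrite (lam_hyps _ _ Dn) (lam_frames _ _ Dn) cardsX card_hyps.
have -> : (2 ^ D.+1)%:R - 1 = (2 ^ D.+1 - 1)%:R :> rat by rewrite natrB ?expn_gt0.
apply: ler_ratio_bound (card_hyp_sections_le A (aD : (a < D.+1)%N) oj eS);
  rewrite ?frames_gt0 ?expn_gt0 //.
  by rewrite subn_gt0 -{1}(expn0 2) ltn_exp2l.
have : (2 * 2 ^ (D.+1 - a) <= 2 ^ D.+1)%N by rewrite -expnS leq_exp2l //; lia.
have := expn_gt0 2 (D.+1 - a); lia.
Qed.

Theorem mainTheorem10 (d s j k t n : nat) (A : {set 'rV['F_2]_n}) :
  (1 <= d)%N -> (1 < s)%N -> (s < 2 ^ d)%N ->
  s = (j * 2 ^ k)%N -> odd j ->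
  (d + t + 1 <= n)%N ->
  lam n (d + t) (2 ^ t * s)%N A <=
    1 / 2 + (1 / 2 - ((2 ^ (d - k))%:R - 1) / ((2 ^ (d + t + 1))%:R - 1))
            * lam n (d + t + 1) (2 ^ t.+1 * s)%N A.
Proof.
move=> _ _ sd es oj; rewrite addn1 => tn.
have kd : (k < d)%N.
  rewrite -(ltn_exp2l _ _ (isT : (1 < 2)%N)) (leq_ltn_trans _ sd) // es leq_pmull //.
  by case: j oj {es}.
rewrite [(2 ^ t.+1)%N]expnS -mulnA (_ : d - k = (d + t).+1 - (k + t).+1)%N; last first.
  by rewrite subSS subnDr.
apply: lam_hyperplane_bound oj _ => //; first by rewrite ltn_add2r.
by rewrite es expnS !expnD; ring.
Qed.
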